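(* Let $\Lambda$ be a lattice of rank $s$ with basis $\mathcal V=(v_1,\ldots,v_s)$, and let $\bar a=(a_1,\ldots,a_t)\in(\mathcal F^0(\Lambda,\bar K))^t$. The bijection $\mathrm{Char}(\Lambda,\bar K^\times)\to(\bar K^\times)^s$, $g^\vee\mapsto(g^\vee(v_1),\ldots,g^\vee(v_s))$, restricts to a bijection from the set of $\bar a$-harmonic characters of $\Lambda$ onto $\Sigma_{\bar a,\mathcal V}$. Moreover, for every $\bar n=(n_1,\ldots,n_s)$ with all $n_i$ positive integers coprime to $p$, there are bijections $$\Sigma_{\bar a,\mathcal V}\cap\mu_{\bar n}\ \cong\ \{\bar a_*\text{-harmonic characters of }G_{\bar n,\mathcal V}\}\ \cong\ V(\bar a_* ),$$ and consequently $d(\bar a,\Lambda_{\bar n,\mathcal V})=\mathrm{card}\,V(\bar a_* )=\mathrm{card}\,(\Sigma_{\bar a,\mathcal V}\cap\mu_{\bar n})$.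
   Context: $K=\mathrm{GF}(p^r)$, $\bar K$ an algebraic closure. A lattice is a free abelian group of finite rank. For an abelian group $G$, $\mathcal F(G,\bar K)$ (resp. $\mathcal F^0(G,\bar K)$) is the space of all (resp. finitely supported) functions $G\to\bar K$; $(f*a)(g)=\sum_h f(h)a(g-h)$, $\Delta_af=f*a$. $\mathrm{Char}(\Lambda,\bar K^\times)$ is the set of homomorphisms $\Lambda\to\bar K^\times$; a function or character $f$ is $\bar a$-harmonic if $f*a_j=0$ for all $j$. The symbol of $a\in\mathcal F^0(\Lambda,\bar K)$ is the Laurent polynomial $\sigma_{a,\mathcal V}=\sum_{v=\sum_i\alpha_iv_i\in\Lambda}a(v)x_1^{-\alpha_1}\cdots x_s^{-\alpha_s}$, and $\Sigma_{\bar a,\mathcal V}=\{\xi\in(\bar K^\times)^s:\sigma_{a_j,\mathcal V}(\xi)=0,\ j=1,\ldots,t\}$. $\mu_{\bar n}=\{\xi\in(\bar K^\times)^s:\xi_i^{n_i}=1\ \forall i\}$. $\Lambda_{\bar n,\mathcal V}=\sum_i n_i\mathbb Z v_i$, $G_{\bar n,\mathcal V}=\Lambda/\Lambda_{\bar n,\mathcal V}$, $\pi:\Lambda\to G_{\bar n,\mathcal V}$ the projection, and $(a_j)_*\in\mathcal F(G_{\bar n,\mathcal V},\bar K)$, $(a_j)_*(c)=\sum_{v\in\pi^{-1}(c)}a_j(v)$; $\bar a_*=((a_1)_*,\ldots,(a_t)_* )$. For $G=G_{\bar n,\mathcal V}$, $G^\vee$ is the group of characters $G\to\bar K^\times$,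 $\hat b(g^\vee)=\sum_{g\in G}b(g)g^\vee(g)$, and $V(\bar a_* )=\{g^\vee\in G^\vee:\widehat{(a_j)_*}(g^\vee)=0\ \forall j\}$. For a finite-index sublattice $\Lambda'$, $d(\bar a,\Lambda')=\dim\bigcap_j\ker\big(\Delta_{a_j}|_{\mathcal F_{\Lambda'}(\Lambda,\bar K)}\big)$, where $\mathcal F_{\Lambda'}(\Lambda,\bar K)$ is the space of $\Lambda'$-periodic functions. *)

From HB Require Import structures.
From mathcomp Require Import all_boot all_order all_algebra.
From mathcomp Require Import finmap.
Set Implicit Arguments. Unset Strict Implicit. Unset Printing Implicit Defensive.
Import Order.TTheory GRing.Theory Num.Theory.
Local Open Scope ring_scope.

(* Ambient field: Kbar, an algebraically closed field of characteristic p,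
   algebraic over its prime subfield (= an algebraic closure of GF(p^r)). *)
Definition algebraic_over_prime_field (F : closedFieldType) : Prop :=
  forall x : F, exists q : {poly F},
    q != 0 /\ (forall i, exists k : nat, q`_i = k%:R) /\ root q x.

Section Lattice.
Variables (F : closedFieldType) (L : zmodType) (s : nat).

Definition fsF := {fsfun L -> F with 0}.

(* (f * a)(g) = sum_h f(h) a(g - h), written as a sum over supp a *)
Definition conv (f : L -> F) (a : fsF) (g : L) : F :=
  \sum_(k <- finsupp a) f (g - k) * a k.

Definition harmonic (t : nat) (a : 'I_t -> fsF) (f : L -> F) : Prop :=
  forall j g, conv f (a j) g = 0.

Definition is_char (chi : L -> F) : Prop :=
  (forall x y, chi (x + y) = chi x * chi y) /\ (forall x, chi x != 0).

(* symbol sigma_{a,V} evaluated at xi; coord w = (alpha_1,...,alpha_s) *)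
Definition symbol_eval (coord : L -> 'I_s -> int) (a : fsF)
    (xi : {ffun 'I_s -> F}) : F :=
  \sum_(w <- finsupp a) a w * \prod_(i < s) xi i ^ (- coord w i).

Definition Sigma (coord : L -> 'I_s -> int) (t : nat) (a : 'I_t -> fsF)
    (xi : {ffun 'I_s -> F}) : Prop :=
  (forall i, xi i != 0) /\ (forall j, symbol_eval coord (a j) xi = 0).

Definition mu (n : 'I_s -> nat) (xi : {ffun 'I_s -> F}) : Prop :=
  forall i, xi i != 0 /\ xi i ^+ n i = 1.

Definition in_Lambda_n (v : 'I_s -> L) (n : 'I_s -> nat) (x : L) : Prop :=
  exists beta : 'I_s -> int, x = \sum_(i < s) v i *~ ((n i)%:Z * beta i).

Definition periodic (P : L -> Prop) (f : L -> F) : Prop :=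
  forall x y, P y -> f (x + y) = f x.
End Lattice.

Section FiniteGroup.
Variables (F : closedFieldType) (L : zmodType) (G : finZmodType).

Definition push (pi : L -> G) (a : fsF F L) (c : G) : F :=
  \sum_(w <- finsupp a | pi w == c) a w.

Definition convG (f b : G -> F) (g : G) : F := \sum_(h : G) f h * b (g - h).

Definition is_charG (chi : G -> F) : Prop :=
  (forall x y, chi (x + y) = chi x * chi y) /\ (forall x, chi x != 0).

Definition harmonicG (t : nat) (b : 'I_t -> G -> F) (f : G -> F) : Prop :=
  forall j g, convG f (b j) g = 0.

Definition fourier (b : G -> F) (chi : G -> F) : F := \sum_(g : G) b g * chi g.

Definition Vset (t : nat) (b : 'I_t -> G -> F) (chi : {ffun G -> F}) : Prop :=
  is_charG chi /\ forall j, fourier (b j) chi = 0.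
End FiniteGroup.

Definition bijection_between (A B : Type) (P : A -> Prop) (Q : B -> Prop) : Prop :=
  exists f : A -> B, (forall x, P x -> Q (f x)) /\
    (forall x y, P x -> P y -> f x = f y -> x = y) /\
    (forall y, Q y -> exists2 x, P x & f x = y).

Definition card_is (A : eqType) (P : A -> Prop) (N : nat) : Prop :=
  exists l : seq A, uniq l /\ size l = N /\ forall x, x \in l <-> P x.

Definition dim_is (T : Type) (F : fieldType) (P : (T -> F) -> Prop) (N : nat) : Prop :=
  (forall f g (c : F), P f -> P g -> P (fun x => c * f x + g x)) /\ P (fun _ => 0) /\
  exists b : 'I_N -> T -> F, (forall k, P (b k)) /\
    (forall c : 'I_N -> F, (forall x, \sum_(k < N) c k * b k x = 0) -> forall k, c k = 0) /\
    (forall f, P f -> exists c : 'I_N -> F, forall x, f x = \sum_(k < N) c k * b k x).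

(* A character chi of Lambda is determined by xi = (chi v_1, ..., chi v_s), and
   every xi in (Kbar^x)^s comes from x |-> prod_i xi_i ^ alpha_i(x).  Convolution
   multiplies such a character by the symbol sigma_a(xi), so harmonic characters
   correspond to Sigma.  The characters of G = Lambda / Lambda_n are those of
   Lambda trivial on Lambda_n, i.e. those with xi in mu_n, and on G the identity
   chi * b = hat(b)(chi^-1) chi identifies harmonic characters with V(a_star) via
   chi |-> chi^-1.  As the n_i are prime to p, the orthogonality relation
   sum_(xi in mu_n) chi_xi = (prod_i n_i) 1_(Lambda_n) writes every periodic function
   as a combination of the chi_xi, xi in mu_n; these are linearly independent
   (Dedekind), and harmonicity kills exactly the coefficients of the xi outside
   Sigma. *)

From HB Require Import structures.
From mathcomp Require Import all_boot all_order all_algebra.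
From mathcomp Require Import finmap.
From mathcomp Require Import ring.
From mathcomp Require Import cyclic separable cyclotomic.
Set Implicit Arguments. Unset Strict Implicit. Unset Printing Implicit Defensive.
Import Order.TTheory GRing.Theory Num.Theory.
Local Open Scope ring_scope.

Section Characters.
Variables (F : closedFieldType) (L : zmodType) (chi : L -> F).
Hypothesis chi_char : is_char chi.

Lemma char0 : chi 0 = 1.
Proof.
apply: (mulfI (chi_char.2 0)).
by rewrite -chi_char.1 addr0 mulr1.
Qed.

Lemma charN x : chi (- x) = (chi x)^-1.
Proof.
apply: (mulfI (chi_char.2 x)).
by rewrite -chi_char.1 subrr char0 mulfV ?chi_char.2.
Qed.

Lemma char_mulz x z : chi (x *~ z) = chi x ^ z.
Proof.
have char_muln m : chi (x *+ m) = chi x ^+ m.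
  by elim: m => [|m IHm]; rewrite ?mulr0n ?char0 // mulrS chi_char.1 IHm exprS.
by case: z => m; rewrite ?NegzE ?mulrNz ?charN char_muln ?invr_expz.
Qed.

Lemma char_sum (I : Type) (r : seq I) (f : I -> L) :
  chi (\sum_(k <- r) f k) = \prod_(k <- r) chi (f k).
Proof.
elim: r => [|k r IHr]; first by rewrite !big_nil char0.
by rewrite !big_cons chi_char.1 IHr.
Qed.

End Characters.

Lemma eq_conv (F : closedFieldType) (L : zmodType) (f1 f2 : L -> F) (b : fsF F L) :
  f1 =1 f2 -> conv f1 b =1 conv f2 b.
Proof. by move=> eq_f g; apply: eq_bigr => k _; rewrite eq_f. Qed.

Lemma conv_sum (F : closedFieldType) (L : zmodType) (I : Type) (r : seq I)
    (e : I -> F) (g : I -> L -> F) (b : fsF F L) x :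
  conv (fun y => \sum_(i <- r) e i * g i y) b x = \sum_(i <- r) e i * conv (g i) b x.
Proof.
rewrite /conv; under eq_bigr do rewrite mulr_suml.
rewrite exchange_big; apply: eq_bigr => i _; rewrite mulr_sumr.
by apply: eq_bigr => k _; rewrite mulrA.
Qed.

Section Coordinates.
Variables (F : closedFieldType) (L : zmodType) (s : nat) (v : 'I_s -> L)
  (coord : L -> 'I_s -> int).
Hypothesis hspan : forall x : L, x = \sum_(i < s) v i *~ coord x i.
Hypothesis hindep : forall alpha : 'I_s -> int,
  \sum_(i < s) v i *~ alpha i = 0 -> forall i, alpha i = 0.

Lemma coord_sum (alpha : 'I_s -> int) i :
  coord (\sum_(j < s) v j *~ alpha j) i = alpha i.
Proof.
apply/eqP; rewrite -subr_eq0; apply/eqP; move: i; apply: hindep.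
under eq_bigr do rewrite mulrzBr.
by rewrite sumrB -hspan subrr.
Qed.

Lemma coordD x y i : coord (x + y) i = coord x i + coord y i.
Proof.
rewrite {1}(hspan x) {1}(hspan y) -big_split /=.
by under eq_bigr do rewrite -mulrzDr; rewrite coord_sum.
Qed.

Lemma coordN x i : coord (- x) i = - coord x i.
Proof.
rewrite {1}(hspan x) -sumrN.
by under eq_bigr do rewrite -mulrNz; rewrite coord_sum.
Qed.

Lemma coord_basis j i : coord (v j) i = (i == j)%:R.
Proof.
have -> : v j = \sum_(k < s) v k *~ (k == j)%:R.
  rewrite (bigD1 j) //= eqxx mulr1z big1 ?addr0 // => k /negPf ->.
  by rewrite mulr0z.
by rewrite coord_sum.
Qed.

Definition char_of (xi : {ffun 'I_s -> F}) (x : L) : F :=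
  \prod_(i < s) xi i ^ coord x i.

Lemma char_of_sum xi (alpha : 'I_s -> int) :
  char_of xi (\sum_(j < s) v j *~ alpha j) = \prod_(i < s) xi i ^ alpha i.
Proof. by apply: eq_bigr => i _; rewrite coord_sum. Qed.

Lemma char_of_basis xi j : char_of xi (v j) = xi j.
Proof.
rewrite /char_of (bigD1 j) //= coord_basis eqxx expr1z big1 ?mulr1 // => i.
by rewrite coord_basis => /negPf ->.
Qed.

Lemma char_char_of chi x : is_char chi -> chi x = char_of [ffun i => chi (v i)] x.
Proof.
move=> chi_char; rewrite {1}(hspan x) char_sum //.
by apply: eq_bigr => i _; rewrite char_mulz // ffunE.
Qed.

Section NonzeroValues.
Variable xi : {ffun 'I_s -> F}.
Hypothesis xi_neq0 : forall i, xi i != 0.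

Lemma char_ofD x y : char_of xi (x + y) = char_of xi x * char_of xi y.
Proof.
by rewrite -big_split; apply: eq_bigr => i _; rewrite coordD expfzDr.
Qed.

Lemma char_of_neq0 x : char_of xi x != 0.
Proof. by rewrite prodf_seq_neq0; apply/allP => i _; apply: expfz_neq0. Qed.

Lemma char_of_is_char : is_char (char_of xi).
Proof. by split; [apply: char_ofD | apply: char_of_neq0]. Qed.

Lemma conv_char_of (b : fsF F L) g :
  conv (char_of xi) b g = char_of xi g * symbol_eval coord b xi.
Proof.
rewrite /conv /symbol_eval big_distrr; apply: eq_bigr => k _ /=.
rewrite char_ofD -mulrA [b k * _]mulrC; congr (_ * (_ * _)).
by apply: eq_bigr => i _; rewrite coordN.
Qed.

End NonzeroValues.

Lemma harmonic_charE t (a : 'I_t -> fsF F L) chi : is_char chi ->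
  harmonic a chi <-> Sigma coord a [ffun i => chi (v i)].
Proof.
move=> chi_char; have chi_neq0 i : [ffun i => chi (v i)] i != 0.
  by rewrite ffunE chi_char.2.
have convE j g : conv chi (a j) g =
    chi g * symbol_eval coord (a j) [ffun i => chi (v i)].
  rewrite (char_char_of g chi_char) -conv_char_of //.
  by apply: eq_bigr => k _; rewrite -char_char_of.
split=> [chi_harm | [_ sigma0] j g]; last by rewrite convE sigma0 mulr0.
split=> // j; apply/eqP; have := chi_harm j 0.
by rewrite convE => /eqP; rewrite mulf_eq0 (negPf (chi_char.2 0)).
Qed.

Lemma char_of_lin_indep (l : seq {ffun 'I_s -> F}) (c : {ffun 'I_s -> F} -> F) :
  uniq l -> (forall xi, xi \in l -> forall i, xi i != 0) ->
  (forall x, \sum_(xi <- l) c xi * char_of xi x = 0) ->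
  forall xi, xi \in l -> c xi = 0.
Proof.
elim: l c => [|eta l IHl] c //= /andP[eta_notin_l l_uniq] l_neq0 rel.
have eta_neq0 := l_neq0 eta (mem_head eta l).
have c_l xi : xi \in l -> c xi = 0.
  move=> xi_l.
  (* relation at x + y minus char_of eta y times relation at x: eta drops out *)
  have shifted y : forall z, z \in l -> c z * (char_of z y - char_of eta y) = 0.
    apply: IHl => [||x] //; first by move=> z z_l; apply: l_neq0; rewrite inE z_l orbT.
    have : \sum_(z <- eta :: l) c z * (char_of z y - char_of eta y) * char_of z x = 0.
      rewrite (eq_big_seq (fun z => c z * char_of z (x + y)
                                   - char_of eta y * (c z * char_of z x))).
        by rewrite sumrB -mulr_sumr !rel mulr0 subrr.
      by move=> z z_l; rewrite char_ofD; [ring | exact: l_neq0].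
    by rewrite big_cons subrr mulr0 mul0r add0r.
  have [i xi_eta_i] : exists i, xi i != eta i.
    apply/existsP; apply: contraNT eta_notin_l => /existsPn xi_eta.
    suff <- : xi = eta by [].
    by apply/ffunP => i; apply/eqP/negPn/xi_eta.
  have /eqP := shifted (v i) xi xi_l.
  by rewrite !char_of_basis mulf_eq0 subr_eq0 (negPf xi_eta_i) orbF => /eqP.
move=> xi; rewrite inE => /predU1P[->|]; last exact: c_l.
have := rel 0; rewrite big_cons big1_seq => [|z /andP[_ /c_l ->]]; last by rewrite mul0r.
by rewrite (char0 (char_of_is_char eta_neq0)) mulr1 addr0.
Qed.

End Coordinates.

Section Quotient.
Variables (F : closedFieldType) (L : zmodType) (s : nat) (v : 'I_s -> L)
  (coord : L -> 'I_s -> int).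
Hypothesis hspan : forall x : L, x = \sum_(i < s) v i *~ coord x i.
Hypothesis hindep : forall alpha : 'I_s -> int,
  \sum_(i < s) v i *~ alpha i = 0 -> forall i, alpha i = 0.
Variables (n : 'I_s -> nat) (G : finZmodType) (pi : L -> G).
Hypothesis piD : forall x y, pi (x + y) = pi x + pi y.
Hypothesis pi_surj : forall c : G, exists x, pi x = c.
Hypothesis pi_ker : forall x, pi x = 0 <-> in_Lambda_n v n x.

Lemma pi0 : pi 0 = 0.
Proof. by apply: (@addrI _ (pi 0)); rewrite -piD !addr0. Qed.

Lemma piB x y : pi (x - y) = pi x - pi y.
Proof.
suff piN : pi (- y) = - pi y by rewrite piD piN.
by apply: (@addrI _ (pi y)); rewrite -piD !subrr pi0.
Qed.

Lemma in_Lambda_n_basis i : in_Lambda_n v n (v i *~ n i).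
Proof.
exists (fun j => (j == i)%:R).
rewrite (bigD1 i) //= eqxx mulr1 big1 ?addr0 // => j /negPf ->.
by rewrite mulr0 mulr0z.
Qed.

Section RootsOfUnity.
Variable xi : {ffun 'I_s -> F}.
Hypothesis xi_mu : mu n xi.

Lemma char_of_periodic : periodic (in_Lambda_n v n) (char_of coord xi).
Proof.
move=> x _ [beta ->]; rewrite (char_ofD hspan hindep); last by move=> i; case: (xi_mu i).
rewrite (char_of_sum hspan hindep) big1 ?mulr1 // => i _.
have xi_n : xi i ^ n i = 1 := (xi_mu i).2.
by rewrite -exprz_exp xi_n exp1rz.
Qed.

Lemma char_of_pi x y : pi x = pi y -> char_of coord xi x = char_of coord xi y.
Proof.
move=> pi_xy; rewrite -(subrKC y x) char_of_periodic //.
by apply/pi_ker; rewrite piB pi_xy subrr.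
Qed.

End RootsOfUnity.

Lemma ex_pi_pre (c : G) : exists x, pi x == c.
Proof. by have [x <-] := pi_surj c; exists x. Qed.

Definition pi_pre (c : G) : L := xchoose (ex_pi_pre c).

Lemma pi_preK c : pi (pi_pre c) = c.
Proof. exact/eqP/(xchooseP (ex_pi_pre c)). Qed.

Definition char_of_quo (xi : {ffun 'I_s -> F}) : {ffun G -> F} :=
  [ffun c => char_of coord xi (pi_pre c)].

Lemma char_of_quoE xi x : mu n xi -> char_of_quo xi (pi x) = char_of coord xi x.
Proof. by move=> xi_mu; rewrite ffunE; apply: char_of_pi; rewrite ?pi_preK. Qed.

Lemma convG_push (f : G -> F) (b : fsF F L) x :
  convG f (push pi b) (pi x) = conv (f \o pi) b x.
Proof.
rewrite /convG /push /conv.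
under eq_bigr do rewrite big_distrr /= big_mkcond /=.
rewrite exchange_big /=; apply: eq_bigr => k _.
rewrite (bigD1 (pi x - pi k)) //= subKr eqxx big1 ?addr0 ?piB // => c /eqP c_ne.
by case: eqP => // pi_k; case: c_ne; rewrite pi_k subKr.
Qed.

Lemma harmonicG_push t (a : 'I_t -> fsF F L) (chi : G -> F) :
  harmonicG (fun j => push pi (a j)) chi <-> harmonic a (chi \o pi).
Proof.
split=> chi_harm j c; first by rewrite -convG_push chi_harm.
by have [x <-] := pi_surj c; rewrite convG_push chi_harm.
Qed.

Lemma is_char_comp_pi (chi : G -> F) : is_charG chi -> is_char (chi \o pi).
Proof. by case=> chiD chi_neq0; split=> [x y|x] /=; rewrite ?piD. Qed.

Lemma bij_Sigma_mu_harmonicG t (a : 'I_t -> fsF F L) :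
  bijection_between (fun xi : {ffun 'I_s -> F} => Sigma coord a xi /\ mu n xi)
    (fun chi : {ffun G -> F} =>
       is_charG chi /\ harmonicG (fun j => push pi (a j)) chi).
Proof.
exists char_of_quo; split; [|split].
- move=> xi [[xi_neq0 xi_Sigma] xi_mu]; split.
    split=> [c d|c]; rewrite !ffunE; last exact: char_of_neq0.
    by rewrite -(char_ofD hspan hindep) //; apply: char_of_pi; rewrite // piD !pi_preK.
  apply/harmonicG_push => j x.
  rewrite (eq_conv _ (fun y => char_of_quoE y xi_mu)).
  by rewrite (conv_char_of hspan hindep) // xi_Sigma mulr0.
- move=> xi1 xi2 [_ xi1_mu] [_ xi2_mu] eq_quo; apply/ffunP => i.
  by rewrite -!(char_of_basis hspan hindep) -!char_of_quoE // eq_quo.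
- move=> chi [chi_char chi_harm].
  have chi_pi_char := is_char_comp_pi chi_char.
  exists [ffun i => chi (pi (v i))].
    split; first exact/(harmonic_charE hspan hindep a chi_pi_char)/harmonicG_push.
    move=> i; rewrite ffunE; split; first exact: chi_pi_char.2.
    change ((chi \o pi) (v i) ^ (n i)%:Z = 1).
    rewrite -(char_mulz chi_pi_char) /= (pi_ker _).2; first exact: (char0 chi_char).
    exact: in_Lambda_n_basis.
  apply/ffunP => c.
  by rewrite ffunE -(char_char_of hspan _ chi_pi_char) /= pi_preK.
Qed.

End Quotient.

Section FiniteGroup.
Variables (F : closedFieldType) (G : finZmodType).

Definition char_opp (chi : {ffun G -> F}) : {ffun G -> F} := [ffun g => chi (- g)].

Lemma char_oppK : involutive char_opp.
Proof. by move=> chi; apply/ffunP => g; rewrite !ffunE opprK. Qed.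

Lemma is_charG_opp (chi : {ffun G -> F}) : is_charG chi -> is_charG (char_opp chi).
Proof.
by case=> chiD chi_neq0; split=> [x y|x]; rewrite !ffunE ?opprD ?chiD ?chi_neq0.
Qed.

Lemma convG_charG (chi : {ffun G -> F}) (b : G -> F) g : is_charG chi ->
  convG chi b g = chi g * fourier b (char_opp chi).
Proof.
move=> [chiD _]; rewrite /convG /fourier (reindex_inj (subrI g)) big_distrr /=.
by apply: eq_bigr => h _; rewrite subKr ffunE chiD mulrCA mulrC.
Qed.

Lemma bij_harmonicG_Vset t (b : 'I_t -> G -> F) :
  bijection_between (fun chi : {ffun G -> F} => is_charG chi /\ harmonicG b chi)
    (Vset b).
Proof.
exists char_opp; split; [|split].
- move=> chi [chi_char chi_harm]; split; first exact: is_charG_opp.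
  move=> j; have := chi_harm j 0.
  by rewrite convG_charG // (char0 chi_char) mul1r.
- by move=> chi1 chi2 _ _ /(congr1 char_opp); rewrite !char_oppK.
- move=> psi [psi_char psi_fourier]; exists (char_opp psi); last exact: char_oppK.
  split=> [|j g]; first exact: is_charG_opp.
  rewrite convG_charG; last exact: is_charG_opp.
  by rewrite [char_opp (char_opp _)]char_oppK psi_fourier mulr0.
Qed.

End FiniteGroup.

Lemma card_is_bij (A B : eqType) (P : A -> Prop) (Q : B -> Prop) N :
  card_is P N -> bijection_between P Q -> card_is Q N.
Proof.
move=> [l [l_uniq [l_size l_P]]] [f [f_PQ [f_inj f_surj]]].
exists (map f l); split; [|split]; first 2 last.
- move=> y; split=> [/mapP[x /l_P Px ->] | /f_surj[x Px <-]]; first exact: f_PQ.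
  by apply: map_f; apply/l_P.
- by rewrite map_inj_in_uniq // => x y /l_P Px /l_P Py; apply: f_inj.
- by rewrite size_map.
Qed.

Lemma prodr_nat_bool (R : comPzSemiRingType) (I : finType) (P : pred I) :
  \prod_(i : I) (P i)%:R = [forall i, P i]%:R :> R.
Proof.
case: (boolP [forall i, P i]) => [/forallP P_all | /forallPn[i /negPf P_i]].
  by rewrite big1 // => i _; rewrite P_all.
by rewrite (bigD1 i) //= P_i mul0r.
Qed.

Lemma dvdz_subr_mod (c : int) (k m : nat) : (k < m)%N ->
  (m%:Z %| c - k%:Z)%Z = ((c %% m%:Z)%Z == k%:Z).
Proof. by move=> k_lt_m; rewrite -eqz_mod_dvd modz_nat modn_small. Qed.

Lemma dim_is_seq_basis (T : Type) (F : fieldType) (X : eqType)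
    (P : (T -> F) -> Prop) (l : seq X) (phi : X -> T -> F) :
  (forall f g (c : F), P f -> P g -> P (fun x => c * f x + g x)) ->
  P (fun _ => 0) -> uniq l -> (forall x, x \in l -> P (phi x)) ->
  (forall c : X -> F, (forall t, \sum_(x <- l) c x * phi x t = 0) ->
     forall x, x \in l -> c x = 0) ->
  (forall f, P f -> exists c : X -> F, forall t, f t = \sum_(x <- l) c x * phi x t) ->
  dim_is P (size l).
Proof.
move=> P_lin P0 l_uniq l_P l_free l_span; split=> //; split=> //.
pose l_ := tnth (in_tuple l); have l_inj : injective l_ by apply/tuple_uniqP.
exists (fun k => phi (l_ k)); split; [|split].
- by move=> k; apply/l_P/mem_tnth.
- move=> c c_rel k.
  pose c' x := \sum_(k < size l | l_ k == x) c k.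
  have c'E k' : c' (l_ k') = c k' by rewrite /c' (big_pred1 k') // => k''; rewrite /= inj_eq.
  rewrite -c'E; apply: (l_free c' _ _ (mem_tnth k (in_tuple l))) => t.
  by rewrite big_tnth -[RHS](c_rel t); apply: eq_bigr => k' _; rewrite c'E.
- by move=> f /l_span[c f_c]; exists (fun k => c (l_ k)) => t; rewrite f_c big_tnth.
Qed.

Lemma prim_root_exists (F : closedFieldType) m : (0 < m)%N -> m%:R != 0 :> F ->
  {z : F | m.-primitive_root z}.
Proof.
move=> m_gt0 m_neq0; pose p : {poly F} := 'X^m - 1.
have [r Dp] := closed_field_poly_normal p; apply/sigW.
rewrite (monicP _) ?monicXnsubC // scale1r in Dp.
have r_unity : all m.-unity_root r by apply/allP => z; rewrite -root_prod_XsubC -Dp.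
have r_size : (m < (size r).+1)%N by rewrite -(size_prod_XsubC r id) -Dp size_XnsubC.
have [|z] := hasP (has_prim_root m_gt0 r_unity _ r_size); last by exists z.
by rewrite -separable_prod_XsubC -Dp separable_Xn_sub_1.
Qed.

Lemma prim_root_exprz_eq1 (F : fieldType) m (w : F) (c : int) :
  m.-primitive_root w -> (w ^ c == 1) = (m%:Z %| c)%Z.
Proof. by move=> w_prim; case: c => k; rewrite dvdzE /= ?invr_eq1 -(prim_order_dvd w_prim). Qed.

Lemma sum_prim_root_exprz (F : fieldType) m (w : F) (c : int) :
  m.-primitive_root w ->
  \sum_(j < m) (w ^+ j) ^ c = if (m%:Z %| c)%Z then m%:R else 0.
Proof.
move=> w_prim; rewrite -(prim_root_exprz_eq1 c w_prim).
have -> : \sum_(j < m) (w ^+ j) ^ c = \sum_(j < m) (w ^ c) ^+ j.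
  by apply: eq_bigr => j _; exact: (exprzAC w j c).
case: eqP => [-> | wc_neq1]; first by under eq_bigr do rewrite expr1n; rewrite sumr_const card_ord.
have wc_m : (w ^ c) ^+ m = 1.
  by rewrite -[_ ^+ m]/((w ^ c) ^ m) exprzAC -[w ^ m]/(w ^+ m) prim_expr_order // exp1rz.
have /esym/eqP := subrX1 (w ^ c) m; rewrite wc_m subrr mulf_eq0 subr_eq0.
by move/eqP/negPf: wc_neq1 => -> /eqP.
Qed.

Section Dimension.
Variables (F : closedFieldType) (L : zmodType) (s : nat) (v : 'I_s -> L)
  (coord : L -> 'I_s -> int).
Hypothesis hspan : forall x : L, x = \sum_(i < s) v i *~ coord x i.
Hypothesis hindep : forall alpha : 'I_s -> int,
  \sum_(i < s) v i *~ alpha i = 0 -> forall i, alpha i = 0.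
Variables (n : 'I_s -> nat) (w : 'I_s -> F).
Hypothesis n_gt0 : forall i, (0 < n i)%N.
Hypothesis w_prim : forall i, (n i).-primitive_root (w i).
Variables (t : nat) (a : 'I_t -> fsF F L).

Definition in_Lambda_nb (y : L) : bool := [forall i, ((n i)%:Z %| coord y i)%Z].

Lemma in_Lambda_nP y : reflect (in_Lambda_n v n y) (in_Lambda_nb y).
Proof.
apply: (iffP forallP) => [n_dvd | [beta ->] i]; last first.
  by rewrite coord_sum // dvdz_mulr.
exists (fun i => (coord y i %/ (n i)%:Z)%Z); rewrite {1}(hspan y).
by apply: eq_bigr => i _; rewrite mulrC divzK.
Qed.

(* mu_n and Lambda / Lambda_n are both indexed by the b : 'I_s -> 'I_bound with
   b i < n i (via root_vec and box_vec); the uniform bound only serves to give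
   all exponents the same type *)
Definition bound := (\sum_(i < s) n i).+1.
Definition box (i : 'I_s) (j : 'I_bound) : bool := (j < n i)%N.
Definition root_vec (b : {ffun 'I_s -> 'I_bound}) : {ffun 'I_s -> F} :=
  [ffun i => w i ^+ b i].
Definition box_vec (b : {ffun 'I_s -> 'I_bound}) : L := \sum_(i < s) v i *~ (b i : nat).
Definition mu_seq : seq {ffun 'I_s -> F} := [seq root_vec b | b <- enum (family box)].

Lemma n_lt_bound i : (n i < bound)%N.
Proof. by rewrite ltnS (bigD1 i) //= leq_addr. Qed.

Lemma root_vec_neq0 b i : root_vec b i != 0.
Proof. by rewrite ffunE expf_neq0 // (prim_root_eq0 (w_prim i)) -lt0n. Qed.

Lemma root_vec_inj : {in family box &, injective root_vec}.
Proof.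
move=> b1 b2 /familyP b1_box /familyP b2_box /ffunP eq_b; apply/ffunP => i.
apply: val_inj; have /eqP := eq_b i; rewrite !ffunE (eq_prim_root_expr (w_prim i)).
by rewrite !modn_small => [/eqP||]; [|exact: b2_box i|exact: b1_box i].
Qed.

Lemma mem_mu_seq xi : xi \in mu_seq <-> mu n xi.
Proof.
split=> [/mapP[b _ ->] i | xi_mu].
  by rewrite root_vec_neq0 ffunE exprAC (prim_expr_order (w_prim i)) expr1n.
pose k i := sval (prim_rootP (w_prim i) (xi_mu i).2).
have xiE i : xi i = w i ^+ k i by rewrite /k; case: prim_rootP.
have kE i : (inord (k i) : 'I_bound) = k i :> nat.
  by rewrite inordK // (leq_trans (ltn_ord (k i))) // ltnW // n_lt_bound.
pose b := [ffun i => (inord (k i) : 'I_bound)].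
have -> : xi = root_vec b by apply/ffunP => i; rewrite !ffunE kE xiE.
by apply: map_f; rewrite mem_enum; apply/familyP => i; rewrite unfold_in /box ffunE kE.
Qed.

Lemma mu_seq_uniq : uniq mu_seq.
Proof. by rewrite map_inj_in_uniq ?enum_uniq // => b1 b2; rewrite !mem_enum; apply: root_vec_inj. Qed.

Lemma mu_seq_neq0 xi : xi \in mu_seq -> forall i, xi i != 0.
Proof. by move/mem_mu_seq => xi_mu i; case: (xi_mu i). Qed.

Lemma sum_char_of_mu y :
  \sum_(b in family box) char_of coord (root_vec b) y =
  \prod_(i < s) (n i)%:R * (in_Lambda_nb y)%:R.
Proof.
transitivity (\sum_(b in family box) \prod_(i < s) (w i ^+ b i) ^ coord y i).
  by apply: eq_bigr => b _; apply: eq_bigr => i _; rewrite ffunE.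
rewrite -(bigA_distr_big_dep _ (fun i (j : 'I_bound) => (w i ^+ j) ^ coord y i)).
rewrite /in_Lambda_nb -prodr_nat_bool -[RHS]big_split /=.
apply: eq_bigr => i _.
transitivity (\sum_(j < n i) (w i ^+ j) ^ coord y i).
  by rewrite (big_ord_widen bound (fun j => (w i ^+ j) ^ coord y i) (ltnW (n_lt_bound i))).
by rewrite sum_prim_root_exprz //; case: ifP; rewrite ?mulr1 ?mulr0.
Qed.

Lemma coord_sub_box_vec x b i : coord (x - box_vec b) i = coord x i - (b i : nat)%:Z.
Proof. by rewrite (coordD hspan hindep) (coordN hspan hindep) (coord_sum hspan hindep). Qed.

Lemma box_rep x : exists2 b0, b0 \in family box &
  forall b, b \in family box -> in_Lambda_nb (x - box_vec b) = (b == b0).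
Proof.
pose r i := `|(coord x i %% (n i)%:Z)%Z|%N.
have rE i : (r i)%:Z = (coord x i %% (n i)%:Z)%Z.
  by rewrite gez0_abs // modz_ge0 // eqz_nat -lt0n.
have r_lt i : (r i < n i)%N by rewrite -ltz_nat rE ltz_pmod // ltz_nat.
pose b0 := [ffun i => (inord (r i) : 'I_bound)].
have b0E i : b0 i = r i :> nat.
  by rewrite ffunE inordK // (leq_trans (r_lt i)) // ltnW // n_lt_bound.
have b0_box : b0 \in family box by apply/familyP => i; rewrite unfold_in /box b0E.
exists b0 => // b /familyP b_box.
apply/forallP/eqP => [b_Lambda | -> i].
  apply/ffunP => i; apply: ord_inj; have := b_Lambda i.
  rewrite coord_sub_box_vec dvdz_subr_mod; last exact: b_box.
  by rewrite b0E -rE eqz_nat => /eqP.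
by rewrite coord_sub_box_vec dvdz_subr_mod b0E ?rE.
Qed.

Lemma periodic_box_decomp (f : L -> F) x : periodic (in_Lambda_n v n) f ->
  f x = \sum_(b in family box) f (box_vec b) * (in_Lambda_nb (x - box_vec b))%:R.
Proof.
move=> f_per; have [b0 b0_box b0_rep] := box_rep x.
rewrite (bigD1 b0) //= b0_rep // eqxx mulr1 big1 ?addr0 => [|b /andP[b_box b_b0]].
  have /in_Lambda_nP := b0_rep b0 b0_box; rewrite eqxx => /(f_per (box_vec b0)).
  by rewrite subrKC.
by rewrite b0_rep // (negPf b_b0) mulr0.
Qed.

Hypothesis n_neq0 : forall i, (n i)%:R != 0 :> F.

Lemma periodic_span_mu (f : L -> F) : periodic (in_Lambda_n v n) f ->
  exists e : {ffun 'I_s -> F} -> F,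
    forall x, f x = \sum_(xi <- mu_seq) e xi * char_of coord xi x.
Proof.
move=> f_per; pose N : F := \prod_(i < s) (n i)%:R.
have N_neq0 : N != 0 by rewrite prodf_seq_neq0; apply/allP => i _; apply: n_neq0.
exists (fun xi => N^-1 *
  \sum_(b in family box) f (box_vec b) * char_of coord xi (- box_vec b)) => x.
rewrite big_map big_enum /= (periodic_box_decomp x f_per).
transitivity (\sum_(b in family box) f (box_vec b) *
  (N^-1 * \sum_(b' in family box) char_of coord (root_vec b') (x - box_vec b))).
  by apply: eq_bigr => b _; rewrite sum_char_of_mu mulKf.
under [RHS]eq_bigr do rewrite mulr_sumr mulr_suml.
rewrite exchange_big /=; apply: eq_bigr => b _; rewrite !mulr_sumr; apply: eq_bigr => b' _.
by rewrite (char_ofD hspan hindep); [ring | exact: root_vec_neq0].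
Qed.

Definition in_Sigma (xi : {ffun 'I_s -> F}) : bool :=
  [forall j, symbol_eval coord (a j) xi == 0].

Definition Sigma_mu_seq : seq {ffun 'I_s -> F} := [seq xi <- mu_seq | in_Sigma xi].

Lemma Sigma_mu_seq_uniq : uniq Sigma_mu_seq.
Proof. exact: filter_uniq mu_seq_uniq. Qed.

Lemma mem_Sigma_mu_seq xi : xi \in Sigma_mu_seq <-> Sigma coord a xi /\ mu n xi.
Proof.
rewrite mem_filter.
split=> [/andP[/forallP xi_Sigma /mem_mu_seq xi_mu] | [[_ xi_Sigma] xi_mu]].
  by split=> //; split=> [i|j]; [case: (xi_mu i) | apply/eqP].
by apply/andP; split; [apply/forallP => j; apply/eqP | apply/mem_mu_seq].
Qed.

Lemma card_Sigma_mu :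
  card_is (fun xi : {ffun 'I_s -> F} => Sigma coord a xi /\ mu n xi) (size Sigma_mu_seq).
Proof.
exists Sigma_mu_seq; split; first exact: Sigma_mu_seq_uniq.
by split=> // xi; apply: mem_Sigma_mu_seq.
Qed.

Lemma periodic_harmonic_span (f : L -> F) :
  periodic (in_Lambda_n v n) f -> harmonic a f ->
  exists e : {ffun 'I_s -> F} -> F,
    forall x, f x = \sum_(xi <- Sigma_mu_seq) e xi * char_of coord xi x.
Proof.
move=> f_per f_harm; have [e f_e] := periodic_span_mu f_per.
have e_Sigma xi : xi \in mu_seq -> ~~ in_Sigma xi -> e xi = 0.
  move=> xi_mu /forallPn[j sigma_j].
  suff /eqP : e xi * symbol_eval coord (a j) xi = 0.
    by rewrite mulf_eq0 (negPf sigma_j) orbF => /eqP.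
  apply: (char_of_lin_indep hspan hindep
    (c := fun xi => e xi * symbol_eval coord (a j) xi) mu_seq_uniq mu_seq_neq0 _ xi_mu).
  move=> x; rewrite -[RHS](f_harm j x) (eq_conv _ f_e) conv_sum.
  apply: eq_big_seq => z z_mu.
  by rewrite (conv_char_of hspan hindep (mu_seq_neq0 z_mu)) mulrA mulrAC.
exists e => x; rewrite f_e big_filter [RHS]big_mkcond; apply: eq_big_seq => xi xi_mu.
by case: ifP => // /negbT xi_Sigma; rewrite e_Sigma ?mul0r.
Qed.

Lemma dim_periodic_harmonic :
  dim_is (fun f : L -> F => periodic (in_Lambda_n v n) f /\ harmonic a f)
    (size Sigma_mu_seq).
Proof.
apply: (dim_is_seq_basis (phi := char_of coord)) Sigma_mu_seq_uniq _ _ _.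
- move=> f g c [f_per f_harm] [g_per g_harm].
  split=> [x y y_Lambda | j x]; first by rewrite f_per ?g_per.
  have := f_harm j x; have := g_harm j x; rewrite /conv => conv_g conv_f.
  under eq_bigr do rewrite mulrDl -mulrA.
  by rewrite big_split -mulr_sumr /= conv_f conv_g mulr0 addr0.
- by split=> [//|j x]; rewrite /conv big1 // => k _; rewrite mul0r.
- move=> xi /mem_Sigma_mu_seq[[xi_neq0 xi_Sigma] xi_mu].
  split=> [|j x]; first exact: char_of_periodic.
  by rewrite (conv_char_of hspan hindep) // xi_Sigma mulr0.
- move=> c; apply: (char_of_lin_indep hspan hindep Sigma_mu_seq_uniq).
  by move=> xi /mem_Sigma_mu_seq[[]].
- by move=> f [f_per f_harm]; apply: periodic_harmonic_span.
Qed.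

End Dimension.

Theorem proposition3p1
  (p r : nat) (hp : prime p) (hr : (0 < r)%N)
  (F : closedFieldType) (hchar : p \in [pchar F])
  (halg : algebraic_over_prime_field F)
  (s : nat) (L : zmodType) (v : 'I_s -> L) (coord : L -> 'I_s -> int)
  (hspan : forall x : L, x = \sum_(i < s) v i *~ coord x i)
  (hindep : forall alpha : 'I_s -> int,
      \sum_(i < s) v i *~ alpha i = 0 -> forall i, alpha i = 0)
  (t : nat) (a : 'I_t -> fsF F L) :
  (* the map Char(Lambda) -> (Kbar^x)^s is a bijection ... *)
  ((forall chi1 chi2 : L -> F, is_char chi1 -> is_char chi2 ->
       (forall i, chi1 (v i) = chi2 (v i)) -> forall x, chi1 x = chi2 x) /\
   (forall xi : {ffun 'I_s -> F}, (forall i, xi i != 0) ->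
       exists2 chi : L -> F, is_char chi & forall i, chi (v i) = xi i) /\
   (* ... restricting to a bijection from harmonic characters onto Sigma *)
   (forall chi : L -> F, is_char chi ->
       (harmonic a chi <-> Sigma coord a [ffun i => chi (v i)]))) /\
  forall (n : 'I_s -> nat), (forall i, (0 < n i)%N /\ coprime (n i) p) ->
  (* G = Lambda / Lambda_n, presented by a surjective hom pi with kernel Lambda_n *)
  forall (G : finZmodType) (pi : L -> G),
    (forall x y, pi (x + y) = pi x + pi y) ->
    (forall c : G, exists x, pi x = c) ->
    (forall x, pi x = 0 <-> in_Lambda_n v n x) ->
  let astar := fun j => push pi (a j) in
  bijection_between (fun xi : {ffun 'I_s -> F} => Sigma coord a xi /\ mu n xi)
                    (fun chi : {ffun G -> F} => is_charG chi /\ harmonicG astar chi) /\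
  bijection_between (fun chi : {ffun G -> F} => is_charG chi /\ harmonicG astar chi)
                    (Vset astar) /\
  exists N : nat,
    dim_is (fun f : L -> F => periodic (in_Lambda_n v n) f /\ harmonic a f) N /\
    card_is (Vset astar) N /\
    card_is (fun xi : {ffun 'I_s -> F} => Sigma coord a xi /\ mu n xi) N.
Proof.
split; [split; [|split] |].
- move=> chi1 chi2 chi1_char chi2_char eq_v x.
  rewrite (char_char_of hspan x chi1_char) (char_char_of hspan x chi2_char).
  by congr char_of; apply/ffunP => i; rewrite !ffunE.
- move=> xi xi_neq0; exists (char_of coord xi); first exact: char_of_is_char.
  by move=> i; rewrite (char_of_basis hspan hindep).
- by move=> chi; apply: harmonic_charE.
move=> n n_cop G pi piD pi_surj pi_ker astar.
have bij_mu := bij_Sigma_mu_harmonicG hspan hindep piD pi_surj pi_ker a.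
have bij_V := bij_harmonicG_Vset astar.
have n_gt0 i : (0 < n i)%N by case: (n_cop i).
have n_neq0 i : (n i)%:R != 0 :> F.
  by rewrite -(dvdn_pcharf hchar) -prime_coprime // coprime_sym; case: (n_cop i).
pose w i := sval (prim_root_exists (n_gt0 i) (n_neq0 i)).
have w_prim i : (n i).-primitive_root (w i) := svalP (prim_root_exists _ _).
have card_mu := card_Sigma_mu coord n_gt0 w_prim a.
split=> //; split=> //; exists (size (Sigma_mu_seq coord n w a)).
split; first exact: dim_periodic_harmonic.
by split=> //; apply: card_is_bij (card_is_bij card_mu bij_mu) bij_V.
Qed.
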